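(* Let $\Sigma$ be a set containing $0$, $(\Gamma,\oplus)$ an abelian group, $n\ge1$, and $K=\{K_1,\ldots,K_k\}$ a partition of $[n]$ into nonempty sets. A function $f:\Sigma^n\to\Gamma$ has $K$-separable arguments if and only if for all $i',i''\in[n]$ lying in different blocks of $K$, all $\bar x\in\Sigma^n$ and all $a',a''\in\Sigma$, $$f(\bar x)\ominus f(\bar x^{[i']}[a'])\ominus f(\bar x^{[i'']}[a''])\oplus f(\bar x^{[i',i'']}[a',a''])=0.$$
   Context: $[n]=\{1,\ldots,n\}$. For $\bar x=(x_1,\ldots,x_n)$, $\bar x^{[i]}[y]$ is $\bar x$ with its $i$th coordinate replaced by $y$, and $\bar x^{[i',i'']}[a',a'']$ is $\bar x$ with coordinates $i',i''$ replaced by $a',a''$. For $L=\{i_1<\cdots<i_m\}\subseteq[n]$, $\bar x_L=(x_{i_1},\ldots,x_{i_m})$. A function $f:\Sigma^n\to\Gamma$ has $K$-separable arguments (for a partition $K=\{K_1,\ldots,K_k\}$ of $[n]$) if there exist functions $f_j:\Sigma^{|K_j|}\to\Gamma$ with $f(\bar x)=f_1(\bar x_{K_1})\oplus\cdots\oplus f_k(\bar x_{K_k})$ for all $\bar x$. *)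

From HB Require Import structures.
From mathcomp Require Import all_boot all_order all_algebra.
Set Implicit Arguments. Unset Strict Implicit. Unset Printing Implicit Defensive.
Import GRing.Theory.
Local Open Scope ring_scope.

(* Sigma^n is represented as {ffun 'I_n -> S}; coordinates are 0-based. *)

Definition upd (S : Type) (n : nat) (x : {ffun 'I_n -> S}) (i : 'I_n) (y : S)
  : {ffun 'I_n -> S} := [ffun j => if j == i then y else x j].

(* x_L = (x_{i_1},...,x_{i_m}) for L = {i_1 < ... < i_m}; enum L lists L increasingly *)
Definition restr (S : Type) (n : nat) (x : {ffun 'I_n -> S}) (L : {set 'I_n})
  : {ffun 'I_#|L| -> S} := [ffun j => x (enum_val j)].

Definition separable_args (S : Type) (G : zmodType) (n : nat)
  (K : {set {set 'I_n}}) (f : {ffun 'I_n -> S} -> G) : Prop :=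
  exists fB : forall B : {set 'I_n}, {ffun 'I_#|B| -> S} -> G,
    forall x, f x = \sum_(B in K) fB B (restr x B).

(* If f is separable, every summand depends on at most one of two coordinates lying in
   different blocks, so the mixed second difference vanishes block by block.
   Conversely, write w<U> for w with its coordinates in U replaced by those of x. The set
   second difference f w - f w<U> - f w<V> + f w<U :|: V> is additive in U (and, by
   symmetry, in V), so it vanishes whenever no coordinate of U interacts with one of V.
   Starting from the constant point z0 and adding the blocks of K one at a time then gives
   f x = f z0 + \sum_(B in K) (f z0<B> - f z0), and z0<B> only depends on x_B. *)

From HB Require Import structures.
From mathcomp Require Import all_boot all_order all_algebra.
Import GRing.Theory.
Local Open Scope ring_scope.

Lemma subset_setU_ind (T : finType) (D : {set T}) (P : {set T} -> Prop) :
  P set0 -> (forall i, i \in D -> P [set i]) ->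
  (forall A B, P A -> P B -> P (A :|: B)) ->
  forall A : {set T}, A \subset D -> P A.
Proof.
move=> P0 P1 PU A; move: {2}#|A| (leqnn #|A|) => m.
elim: m A => [|m IH] A leAm sAD.
  by move: leAm; rewrite leqn0 cards_eq0 => /eqP ->.
have [->|[i Ai]] := set_0Vmem A; first exact: P0.
rewrite -(setD1K Ai); apply: PU; first exact/P1/(subsetP sAD).
apply: IH; last exact: subset_trans (subD1set A i) sAD.
by rewrite -ltnS (leq_trans _ leAm) // (cardsD1 i A) Ai.
Qed.

Lemma subr_subr_addr_eq0 (G : zmodType) (a b c d : G) :
  a - b - c + d = 0 -> d = c + (b - a).
Proof.
move=> h; apply/eqP; rewrite -subr_eq0 -h.
by rewrite opprD opprB addrC (addrC (- c)).
Qed.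

Lemma second_diff_telescope (G : zmodType) (a b c d e g : G) :
  (a - b - c + d) + (b - e - d + g) = a - e - c + g.
Proof.
rewrite addrACA -addrA (addrA (b - e - d)) subrK addrAC (addrA (a - b)) addrAC.
by rewrite -(addrA a) (addrA (- b)) addNr add0r.
Qed.

Section SecondDifferences.
Context {S : Type} {G : zmodType} {n : nat} (f : {ffun 'I_n -> S} -> G).
Implicit Types (x y w : {ffun 'I_n -> S}) (U V : {set 'I_n}).

Definition second_diff x i a j b :=
  f x - f (upd x i a) - f (upd x j b) + f (upd (upd x i a) j b).

Definition separated i j := forall x a b, second_diff x i a j b = 0.

Definition mix y w V : {ffun 'I_n -> S} := [ffun k => if k \in V then y k else w k].

Lemma mix0 y w : mix y w set0 = w.
Proof. by apply/ffunP=> k; rewrite !ffunE inE. Qed.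

Lemma mixT y w : mix y w [set: 'I_n] = y.
Proof. by apply/ffunP=> k; rewrite !ffunE inE. Qed.

Lemma mix1 y w i : mix y w [set i] = upd w i (y i).
Proof. by apply/ffunP=> k; rewrite !ffunE inE; case: eqP => [->|]. Qed.

Lemma mix_mix y w U V : mix y (mix y w U) V = mix y w (U :|: V).
Proof. by apply/ffunP=> k; rewrite !ffunE in_setU orbC; case: (k \in V). Qed.

Definition set_second_diff y w U V :=
  f w - f (mix y w U) - f (mix y w V) + f (mix y w (U :|: V)).

Lemma set_second_diffC y w U V : set_second_diff y w U V = set_second_diff y w V U.
Proof. by rewrite /set_second_diff setUC (addrAC (f w)). Qed.

Lemma set_second_diff0l y w V : set_second_diff y w set0 V = 0.
Proof. by rewrite /set_second_diff mix0 set0U subrr sub0r addNr. Qed.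

Lemma set_second_diff1 y w i j :
  set_second_diff y w [set i] [set j] = second_diff w i (y i) j (y j).
Proof. by rewrite /set_second_diff -mix_mix !mix1. Qed.

Lemma set_second_diffUl y w U1 U2 V :
  set_second_diff y w (U1 :|: U2) V =
  set_second_diff y w U1 V + set_second_diff y (mix y w U1) U2 V.
Proof.
by rewrite /set_second_diff !mix_mix -setUA (setUC U2) setUA second_diff_telescope.
Qed.

Lemma set_second_diff_eq0 U V :
  (forall i j, i \in U -> j \in V -> separated i j) ->
  forall y w, set_second_diff y w U V = 0.
Proof.
move=> sepUV y; pose P A := forall w, set_second_diff y w A V = 0.
apply: (@subset_setU_ind _ U P) => //.
- by move=> w; rewrite set_second_diff0l.
- move=> i Ui; pose Q B := forall w, set_second_diff y w [set i] B = 0.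
  apply: (@subset_setU_ind _ V Q) => //.
  + by move=> w; rewrite set_second_diffC set_second_diff0l.
  + by move=> j Vj w; rewrite set_second_diff1; apply: sepUV.
  + by move=> A B QA QB w; rewrite set_second_diffC set_second_diffUl
      set_second_diffC QA set_second_diffC QB addr0.
- by move=> A B PA PB w; rewrite set_second_diffUl PA PB addr0.
Qed.

Lemma f_mix_bigcup y w (r : seq {set 'I_n}) : uniq r ->
  (forall A B, A \in r -> B \in r -> A != B ->
     forall i j, i \in A -> j \in B -> separated i j) ->
  f (mix y w (\bigcup_(B <- r) B)) = f w + \sum_(B <- r) (f (mix y w B) - f w).
Proof.
elim: r => [|B r IH] /=; first by rewrite !big_nil mix0 addr0.
case/andP=> rB r_uniq sep_r; rewrite !big_cons.
have sepBr : forall i j, i \in B -> j \in \bigcup_(A <- r) A -> separated i j.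
  move=> i j Bi; rewrite bigcup_seq => /bigcupP [A rA Aj].
  apply: (sep_r B A) => //; rewrite ?mem_head ?inE ?rA ?orbT //.
  by apply: contraNneq rB => ->.
move/subr_subr_addr_eq0: (set_second_diff_eq0 _ _ sepBr y w) => ->.
rewrite IH //.
  by rewrite -addrA (addrC (\sum_(A <- r) _)).
by move=> A C rA rC; apply: sep_r; rewrite inE ?rA ?rC orbT.
Qed.
End SecondDifferences.

Section Restriction.
Context {S : Type} {n : nat}.
Implicit Types (x : {ffun 'I_n -> S}) (B : {set 'I_n}).

Lemma upd_comm x i j a b : i != j -> upd (upd x i a) j b = upd (upd x j b) i a.
Proof.
move=> neq_ij; apply/ffunP=> k; rewrite !ffunE.
by case: (eqVneq k j) => [->|//]; rewrite eq_sym (negbTE neq_ij).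
Qed.

Lemma restr_upd x B i a : i \notin B -> restr (upd x i a) B = restr x B.
Proof.
move=> Bi; apply/ffunP=> k; rewrite !ffunE.
by case: eqP => // eq_ki; move: (enum_valP k); rewrite eq_ki (negbTE Bi).
Qed.

Definition extend (z : S) B (w : {ffun 'I_#|B| -> S}) : {ffun 'I_n -> S} :=
  [ffun j => if insub (index j (enum B)) is Some k then w k else z].

Lemma extend_restr z x B : extend z B (restr x B) = mix x [ffun=> z] B.
Proof.
apply/ffunP=> j; rewrite !ffunE; have [Bj|Bj] := boolP (j \in B).
  have idx_lt : (index j (enum B) < #|B|)%N by rewrite cardE index_mem mem_enum.
  by rewrite insubT /= ffunE (enum_val_nth j) /= nth_index ?mem_enum.
rewrite insubF //= cardE; apply/negbTE; rewrite -leqNgt.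
by rewrite memNindex ?mem_enum.
Qed.

End Restriction.

Lemma separable_args_separated {S : Type} {G : zmodType} {n : nat}
    (K : {set {set 'I_n}}) (f : {ffun 'I_n -> S} -> G) :
  trivIset K -> separable_args K f ->
  forall i j, pblock K i != pblock K j -> separated f i j.
Proof.
move=> tK [fB sep_f] i j pij x a b.
rewrite /second_diff !sep_f -!sumrB -big_split /=; apply: big1 => B KB.
have [Bi|Bi] := boolP (i \in B).
  have Bj : j \notin B.
    apply: contra pij => Bj.
    by rewrite (def_pblock tK KB Bi) (def_pblock tK KB Bj).
  by rewrite !(restr_upd _ _ _ _ Bj) addrAC subrK subrr.
rewrite upd_comm; last by apply: contraNneq pij => ->.
by rewrite !(restr_upd _ _ _ _ Bi) subrr sub0r addNr.
Qed.

Lemma separated_separable_args {S : Type} (z : S) {G : zmodType} {n : nat}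
    (K : {set {set 'I_n}}) (f : {ffun 'I_n -> S} -> G) (B0 : {set 'I_n}) :
  partition K [set: 'I_n] -> B0 \in K ->
  (forall i j, pblock K i != pblock K j -> separated f i j) -> separable_args K f.
Proof.
case/and3P=> /eqP covK tK _ KB0 sepK; pose z0 : {ffun 'I_n -> S} := [ffun=> z].
have f_sum x : f x = f z0 + \sum_(B in K) (f (mix x z0 B) - f z0).
  rewrite -{1}(mixT x z0) -covK /cover -big_enum f_mix_bigcup ?enum_uniq ?big_enum //.
  move=> A B; rewrite !mem_enum => KA KB neqAB i j Ai Bj; apply: sepK.
  by rewrite (def_pblock tK KA Ai) (def_pblock tK KB Bj).
(* The constant f z0 is charged to the single block B0. *)
exists (fun B w => f (extend z B w) - f z0 + (if B == B0 then f z0 else 0)).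
move=> x; rewrite big_split /= [X in _ + X](bigD1 B0) //= eqxx.
rewrite [X in _ + (_ + X)]big1 => [|B /andP [_ /negbTE ->] //].
by rewrite addr0 f_sum addrC; congr (_ + _); apply: eq_bigr => B _; rewrite extend_restr.
Qed.

Theorem lemmaA1 (S : Type) (z : S) (G : zmodType) (n : nat) (hn : (0 < n)%N)
  (K : {set {set 'I_n}})
  (hK : partition K [set: 'I_n]) (hne : set0 \notin K)
  (f : {ffun 'I_n -> S} -> G) :
  separable_args K f <->
  (forall (i' i'' : 'I_n), pblock K i' != pblock K i'' ->
     forall (x : {ffun 'I_n -> S}) (a' a'' : S),
       f x - f (upd x i' a') - f (upd x i'' a'') + f (upd (upd x i' a') i'' a'') = 0).
Proof.
have /and3P [/eqP covK tK _] := hK.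
split=> [sep_f | sepK]; first exact: separable_args_separated tK sep_f.
have KB0 : pblock K (Ordinal hn) \in K by rewrite pblock_mem // covK inE.
exact: (separated_separable_args z K f _ hK KB0 sepK).
Qed.
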